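(* Let $G=(V,E)$ be a finite simple graph and let $\widehat G$ be its associated 2-colored complete graph. Then $G$ is a threshold graph if and only if $\dim \mathcal{A}(\widehat G)=0$.
   Context: A simple graph $G=(V,E)$ is threshold if there are real vertex weights $c(v)$, $v\in V$, such that every pair $\{u,v\}\in\binom{V}{2}$ satisfies $c(u)+c(v)>0$ if $\{u,v\}\in E$ and $c(u)+c(v)<0$ if $\{u,v\}\notin E$. The associated 2-colored graph $\widehat G$ is the complete graph $(V,\binom{V}{2})$ in which a pair is colored red if it is an edge of $G$ and blue otherwise. For a 2-colored graph $H=(V,F)$ (edges colored red/blue), the alternating cone $\mathcal{A}(H)\subseteq\mathbb{R}^F$ is the set of $x\in\mathbb{R}^F$ with $x(e)\ge 0$ for all $e\in F$ and, for every vertex $v$, the sum of $x(e)$ over red edges $e$ incident with $v$ equals the sum of $x(e)$ over blue edges $e$ incident with $v$. *)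

From HB Require Import structures.
From mathcomp Require Import all_boot all_order all_algebra.
From mathcomp Require Import reals.
Set Implicit Arguments.
Unset Strict Implicit.
Unset Printing Implicit Defensive.
Import Order.TTheory GRing.Theory Num.Theory.
Local Open Scope ring_scope.

Section Defs.
Variable V : finType.

Definition simple_graph (adj : rel V) : Prop :=
  symmetric adj /\ irreflexive adj.

Definition threshold (R : realType) (adj : rel V) : Prop :=
  exists c : V -> R, forall u v : V, u != v ->
    (adj u v -> 0 < c u + c v) /\ (~~ adj u v -> c u + c v < 0).

(* The pairs {u,v} in binom(V,2): the edge set of the complete graph on V. *)
Definition pair_pred : pred {set V} := fun A => #|A| == 2.
Notation pairs := {A : {set V} | pair_pred A}.

(* The 2-coloring of \hat G: a pair is red iff it is an edge of G. *)
Definition red (adj : rel V) (e : pairs) : bool :=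
  [forall u in val e, forall v in val e, (u != v) ==> adj u v].

Definition alt_cone (R : realType) (adj : rel V) : pred {ffun pairs -> R^o} :=
  fun x =>
    [forall e : pairs, 0 <= x e] &&
    [forall v, (\sum_(e : pairs | (v \in val e) && red adj e) x e)
               == \sum_(e : pairs | (v \in val e) && ~~ red adj e) x e].

(* Dimension of a subset S of a finite-dim vector space: the maximal number
   of linearly independent vectors in S (= dimension of its linear span). *)
Definition set_dim (R : fieldType) (vT : vectType R) (S : pred vT) (d : nat)
  : Prop :=
  (exists s : seq vT, [/\ size s = d, all S s & free s]) /\
  (forall s : seq vT, all S s -> free s -> (size s <= d)%N).

End Defs.

Arguments threshold {V} R adj.
Arguments alt_cone {V} R adj.

From HB Require Import structures.
From mathcomp Require Import all_boot all_order all_algebra.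
From mathcomp Require Import reals.
From mathcomp Require Import lra.
Set Implicit Arguments.
Unset Strict Implicit.
Unset Printing Implicit Defensive.
Import Order.TTheory GRing.Theory Num.Theory.
Local Open Scope ring_scope.

(* Weighting the balance equation of x at v by c v and summing gives
   sum_e x e * s e * (c u + c w) = 0, where e = {u, w} and s = +1 on red
   pairs, -1 on blue ones; threshold weights make every coefficient positive,
   so the alternating cone is {0}.  Conversely, an alternating 4-cycle (red ab,
   blue bc, red cd, blue da) is a nonzero vector of the cone, so a trivial cone
   forces G to have no induced 2K2, P4 or C4.  In such a graph a vertex w of
   maximum degree within a vertex set S is either adjacent to all of S, or any
   non-neighbour of w is isolated in S.  Removing such a vertex and giving it
   the weight +-M, with M larger than all other weights in absolute value,
   builds threshold weights by induction. *)

Lemma set_dim0P (K : fieldType) (vT : vectType K) (S : pred vT) :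
  set_dim S 0 <-> {in S, forall x, x = 0}.
Proof.
split=> [[_ free_le0] x Sx | S0].
  apply/eqP; apply: contraT => x_neq0.
  by have := free_le0 [:: x]; rewrite /= andbT seq1_free x_neq0 => /(_ Sx isT).
split; first by exists [::]; rewrite nil_free.
case=> [//|y s] /= /andP[Sy _] /free_not0/(_ (mem_head y s)).
by rewrite (S0 y Sy) eqxx.
Qed.

Lemma sum_incidence (R : comPzSemiRingType) (I T : finType) (A : I -> {set T})
    (F : I -> R) (c : T -> R) :
  \sum_i F i * \sum_(v in A i) c v = \sum_v c v * \sum_(i | v \in A i) F i.
Proof.
under eq_bigr do rewrite mulr_sumr big_mkcond.
rewrite exchange_big; apply: eq_bigr => v _.
rewrite mulr_sumr [RHS]big_mkcond; apply: eq_bigr => i _.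
by case: (v \in A i); rewrite ?mulr0 // mulrC.
Qed.

Lemma sum_count_mem (I : finType) (Q : pred I) (s : seq I) :
  (\sum_(i | Q i) count_mem i s)%N = count Q s.
Proof.
elim: s => [|j s IHs] /=; first by rewrite big1.
rewrite big_split /= IHs big_mkcond (bigD1 j) //= eqxx.
rewrite big1 ?addn0 => [|i /negPf].
  by case: (Q j).
by rewrite eq_sym => ->; case: (Q i).
Qed.

Lemma nat_in_set2 (T : finType) (a b x : T) :
  a != b -> ((x \in [set a; b]) = (x == a) + (x == b) :> nat)%N.
Proof.
by rewrite in_set2; have [->|_] := eqVneq x a; rewrite ?addn0 // => /negPf->.
Qed.

Lemma irreflexive_neq (T : eqType) (r : rel T) :
  irreflexive r -> forall x y, r x y -> x != y.
Proof. by move=> r_irr x y; apply: contraTneq => ->; rewrite r_irr. Qed.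

Definition threshold_weights (R : numDomainType) (V : finType) (adj : rel V)
    (c : V -> R) (S : {set V}) : Prop :=
  {in S &, forall u v, u != v ->
    (adj u v -> 0 < c u + c v) /\ (~~ adj u v -> c u + c v < 0)}.

(* [a != b] and [c != d] are left out: they follow from irreflexivity. *)
Definition alt_C4_free (V : finType) (adj : rel V) : Prop :=
  forall a b c d, b != c -> d != a ->
    adj a b -> ~~ adj b c -> adj c d -> ~~ adj d a -> False.

Section AltCone.
Variables (R : realType) (V : finType) (adj : rel V).
Hypotheses (adj_sym : symmetric adj) (adj_irr : irreflexive adj).

Notation pairs := {A : {set V} | pair_pred A}.

Lemma pair_set2 (e : pairs) : exists u w, u != w /\ val e = [set u; w].
Proof. exact/cards2P/(valP e). Qed.

Lemma pair_pred_set2 (u w : V) : u != w -> pair_pred [set u; w].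
Proof. by rewrite /pair_pred cards2 => ->. Qed.

Definition pair_of (u w : V) (uw : u != w) : pairs :=
  exist _ [set u; w] (pair_pred_set2 uw).

Lemma red_set2 (e : pairs) u w :
  u != w -> val e = [set u; w] -> red adj e = adj u w.
Proof.
rewrite /red => uw ->; apply/forall_inP/idP => [red_uw | uw_adj x].
  by have /forall_inP/(_ w (set22 u w))/implyP := red_uw u (set21 u w); apply.
by case/set2P=> ->; apply/forall_inP => y /set2P[]->;
  rewrite ?eqxx ?[adj w u]adj_sym ?uw_adj ?implybT.
Qed.

Lemma red_pair_of u w (uw : u != w) : red adj (pair_of uw) = adj u w.
Proof. exact: red_set2. Qed.

Definition red_sign (e : pairs) : R := if red adj e then 1 else -1.

Lemma alt_cone_balance (x : {ffun pairs -> R^o}) (v : V) : alt_cone R adj x ->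
  \sum_(e : pairs | v \in val e) red_sign e * x e = 0.
Proof.
case/andP=> _ /forallP/(_ v)/eqP balance_v.
rewrite (bigID (red adj)) /= (eq_bigr x) => [|e /andP[_ red_e]]; last first.
  by rewrite /red_sign red_e mul1r.
rewrite [X in _ + X](eq_bigr (fun e => - x e)) => [|e /andP[_ /negPf blue_e]].
  by rewrite sumrN balance_v subrr.
by rewrite /red_sign blue_e mulN1r.
Qed.

Lemma red_sign_weight_gt0 (c : V -> R) (e : pairs) :
  threshold_weights adj c [set: V] -> 0 < red_sign e * \sum_(v in val e) c v.
Proof.
move=> c_thr; have [u [w [uw e_uw]]] := pair_set2 e.
have [adj_pos nadj_neg] := c_thr u w (in_setT u) (in_setT w) uw.
rewrite /red_sign (red_set2 uw e_uw) e_uw big_setU1 ?big_set1 /= ?inE //.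
by case: ifPn => [/adj_pos | /nadj_neg]; rewrite ?mul1r ?mulN1r ?oppr_gt0.
Qed.

Lemma threshold_alt_cone_trivial (c : V -> R) :
  threshold_weights adj c [set: V] -> {in alt_cone R adj, forall x, x = 0}.
Proof.
move=> c_thr x x_cone; have /andP[/forallP x_ge0 _] := x_cone.
have term_ge0 e : 0 <= red_sign e * x e * \sum_(v in val e) c v.
  by rewrite mulrAC mulr_ge0 // ltW // red_sign_weight_gt0.
have sum_eq0 : \sum_e red_sign e * x e * \sum_(v in val e) c v = 0.
  rewrite sum_incidence big1 // => v _.
  by rewrite alt_cone_balance ?mulr0.
apply/ffunP => e; rewrite ffunE.
have /eqP := psumr_eq0P (fun e _ => term_ge0 e) sum_eq0 (i := e) isT.
by rewrite mulrAC mulf_eq0 gt_eqF ?red_sign_weight_gt0 //= => /eqP.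
Qed.

Lemma trivial_alt_cone_C4_free :
  {in alt_cone R adj, forall x, x = 0} -> alt_C4_free adj.
Proof.
move=> cone0 a b c d bc da ab nbc cd nda.
have a_neq_b := irreflexive_neq adj_irr ab.
have c_neq_d := irreflexive_neq adj_irr cd.
pose e_ab := pair_of a_neq_b; pose e_bc := pair_of bc.
pose e_cd := pair_of c_neq_d; pose e_da := pair_of da.
(* Counting multiplicities spares us proving the four pairs distinct. *)
pose x : {ffun pairs -> R^o} :=
  [ffun e => (count_mem e [:: e_ab; e_bc; e_cd; e_da])%:R].
have x_cone : alt_cone R adj x.
  apply/andP; split; first by apply/forallP => e; rewrite ffunE ler0n.
  apply/forallP => v; under eq_bigr do rewrite ffunE.
  under [X in _ == X]eq_bigr do rewrite ffunE.
  rewrite -!natr_sum !sum_count_mem /=.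
  rewrite !red_pair_of (negPf nbc) (negPf nda) ab cd.
  rewrite /= !andbT !andbF !nat_in_set2 //.
  by rewrite eqr_nat /= !addnA !addn0 add0n [X in _ == X]addnC !addnA.
have /ffunP/(_ e_ab) := cone0 x x_cone.
by rewrite !ffunE /= eqxx => /eqP; rewrite pnatr_eq0.
Qed.

End AltCone.

Section ThresholdWeights.
Variables (R : realDomainType) (V : finType) (adj : rel V).
Hypotheses (adj_sym : symmetric adj) (adj_irr : irreflexive adj).

Definition nbhd (S : {set V}) (v : V) : {set V} := [set y in S | adj v y].

Lemma card_nbhd_lt (S : {set V}) (w z t : V) :
    w \in S -> z \in S -> t \in S -> t != w -> adj z t -> ~~ adj w t ->
    {subset nbhd S w :\ z <= nbhd S z} ->
  (#|nbhd S w| < #|nbhd S z|)%N.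
Proof.
move=> wS zS tS tw zt nwt sub_wz.
have t_notin : t \notin nbhd S w :\ z by rewrite !inE (negPf nwt) !andbF.
have : t |: (nbhd S w :\ z) \subset nbhd S z :\ w.
  apply/subsetP => y /setU1P[-> | yN]; first by rewrite !inE tw tS zt.
  rewrite in_setD1 sub_wz // andbT.
  move: yN; rewrite !inE => /and3P[_ _ /(irreflexive_neq adj_irr)].
  by rewrite eq_sym.
move/subset_leq_card; rewrite cardsU1 t_notin add1n.
have z_in_w : (z \in nbhd S w) = (w \in nbhd S z) by rewrite !inE wS zS adj_sym.
by rewrite (cardsD1 z (nbhd S w)) (cardsD1 w (nbhd S z)) z_in_w ltn_add2l.
Qed.

Hypothesis adj_C4 : alt_C4_free adj.

Lemma exists_uniform_vertex (S : {set V}) (w0 : V) : w0 \in S ->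
  exists2 w, w \in S & exists b, {in S, forall v, v != w -> adj w v = b}.
Proof.
move=> w0S; have [w wS wmax] := arg_maxnP (fun v => #|nbhd S v|) w0S.
have [univ | ] := boolP [forall (v | v \in S), (v != w) ==> adj w v].
  by exists w => //; exists true => v vS; apply/implyP/(forall_inP univ).
rewrite negb_forall_in => /exists_inP[a aS].
rewrite negb_imply => /andP[aw nwa].
exists a => //; exists false => b bS ba; apply/negbTE/negP => ab.
have bw : b != w by apply: contraNneq nwa => <-; rewrite adj_sym.
have [wb | nwb] := boolP (adj w b).
- have ba_adj : adj b a by rewrite adj_sym.
  have := wmax b bS; rewrite /= leqNgt => /negP; apply.
  apply: (card_nbhd_lt wS bS aS aw ba_adj nwa).
  move=> y; rewrite !inE => /and3P[yb yS wy]; rewrite yS /=.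
  apply/negPn/negP => nby.
  by apply: (adj_C4 _ _ ab nby _ nwa); rewrite 1?eq_sym // adj_sym.
- have := wmax a aS; rewrite /= leqNgt => /negP; apply.
  apply: (card_nbhd_lt wS aS bS bw ab nwb).
  move=> y; rewrite !inE => /and3P[ya yS wy]; rewrite yS /=.
  apply/negPn/negP => nay.
  by apply: (adj_C4 ya bw wy _ ab); rewrite adj_sym.
Qed.

Lemma threshold_weights_extend (S : {set V}) (w : V) (b : bool)
    (c : V -> R) : w \in S -> {in S, forall v, v != w -> adj w v = b} ->
    threshold_weights adj c (S :\ w) ->
  exists c' : V -> R, threshold_weights adj c' S.
Proof.
move=> wS w_unif c_thr.
pose M := 1 + \sum_v `|c v|.
have c_lt_M v : - M < c v < M.
  rewrite -ltr_norml /M (bigD1 v) //= addrCA ltrDl ltr_pwDl //.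
  by rewrite sumr_ge0.
(* As |c v| < M, the sign of c' w + c' v is that of c' w = +-M. *)
pose c' v := if v == w then (if b then M else - M) else c v.
have c'_w v : v \in S -> v != w ->
    (adj w v -> 0 < c' w + c' v) /\ (~~ adj w v -> c' w + c' v < 0).
  move=> vS vw; rewrite /c' eqxx (negPf vw) (w_unif v vS vw).
  by have := c_lt_M v; case: (b) => /andP[? ?]; split=> // _; lra.
exists c' => u v uS vS uv.
have [uw | uw] := eqVneq u w; first by subst u; apply: c'_w; rewrite // eq_sym.
have [vw | vw] := eqVneq v w.
  by subst v; rewrite addrC adj_sym; apply: c'_w.
by rewrite /c' (negPf uw) (negPf vw); apply: c_thr; rewrite // !inE ?uw ?vw.
Qed.

Lemma threshold_weights_exist (S : {set V}) :
  exists c : V -> R, threshold_weights adj c S.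
Proof.
have [n] := ubnP #|S|; elim: n S => // n IHn S /ltnSE leSn.
have [-> | [w0 w0S]] := set_0Vmem S.
  by exists (fun=> 0) => u v; rewrite inE.
have [w wS [b w_unif]] := exists_uniform_vertex w0S.
have [c c_thr] : exists c : V -> R, threshold_weights adj c (S :\ w).
  by apply: IHn; rewrite (cardsD1 w S) wS add1n in leSn.
exact: threshold_weights_extend wS w_unif c_thr.
Qed.

End ThresholdWeights.

Theorem theorem2p1 (R : realType) (V : finType) (adj : rel V) :
  simple_graph adj ->
  (threshold R adj <-> set_dim (alt_cone R adj) 0).
Proof.
move=> [adj_sym adj_irr]; rewrite set_dim0P; split=> [[c c_thr] | cone0].
  apply: (threshold_alt_cone_trivial adj_sym (c := c)) => u v _ _.
  exact: c_thr.
have C4_free := trivial_alt_cone_C4_free adj_sym adj_irr cone0.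
have [c c_thr] := threshold_weights_exist R adj_sym adj_irr C4_free [set: V].
by exists c => u v; apply: c_thr; rewrite inE.
Qed.
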